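(* Fix an environment $(\mathcal{S},\mathcal{A},\mathcal{T},d_0,\_,\gamma)$ and a set $\Pi$ of stationary policies containing a nonempty open subset of $\Pi^+$. Then every pair of reward functions $(\mathcal{R},\mathcal{R}')$ with $J_{\mathcal{R}},J_{\mathcal{R}'}$ both non-trivial on $\Pi$ and not equivalent on $\Pi$ is hackable relative to $\Pi$ and this environment.
   Context: Setting: finite $\mathcal{S}$, finite $\mathcal{A}$ with $|\mathcal{A}|>1$, transition model $\mathcal{T}:\mathcal{S}\times\mathcal{A}\to\Delta(\mathcal{S})$, $d_0\in\Delta(\mathcal{S})$, $\gamma\in[0,1)$, all states reachable; an environment is an MDP without its reward; rewards are $\mathcal{R}:\mathcal{S}\times\mathcal{A}\to\mathbb{R}$. Stationary policies are identified with $\Delta(\mathcal{A})^{|\mathcal{S}|}\subset\mathbb{R}^{\mathcal{S}\times\mathcal{A}}$; $\Pi^+$ is the set with $\pi(a\mid s)>0$ for all $s,a$, and ''open'' means open in $\Pi^+$. $J_{\mathcal{R}}(\pi)=\mathbb{E}\big[\sum_{t\ge0}\gamma^t\mathcal{R}(s_t,a_t)\big]$ with $s_0\sim d_0$, $a_t\sim\pi(\cdot\mid s_t)$, $s_{t+1}\sim\mathcal{T}(\cdot\mid s_t,a_t)$. $J$ is trivial on $\Pi$ if constant on $\Pi$; $J_1,J_2$ equivalent on $\Pi$ if for all $\pi,\pi'\in\Pi$, $J_1(\pi)\ge J_1(\pi')\iff J_2(\pi)\ge J_2(\pi')$. $(\mathcal{R},\mathcal{R}')$ is hackable relative to $\Pi$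 if there are $\pi,\pi'\in\Pi$ with $J_{\mathcal{R}}(\pi)>J_{\mathcal{R}}(\pi')$ and $J_{\mathcal{R}'}(\pi')>J_{\mathcal{R}'}(\pi)$. *)

From HB Require Import structures.
From mathcomp Require Import all_boot all_order all_algebra.
From mathcomp Require Import all_classical all_reals all_analysis.
Set Implicit Arguments. Unset Strict Implicit. Unset Printing Implicit Defensive.
Import Order.TTheory GRing.Theory Num.Theory.
Local Open Scope ring_scope.
Local Open Scope classical_set_scope.

Section MDP.
Variables (R : realType) (S A : finType).

Definition is_distr (T : finType) (p : T -> R) :=
  (forall x, 0 <= p x) /\ \sum_(x : T) p x = 1.

Definition is_transition (Tr : S -> A -> S -> R) :=
  forall s a, is_distr (Tr s a).

Definition is_policy (pi : S -> A -> R) := forall s, is_distr (pi s).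

Definition Pplus : set (S -> A -> R) :=
  [set pi | is_policy pi /\ forall s a, 0 < pi s a].

Definition pdist (pi pi' : S -> A -> R) : R :=
  \big[Num.max/0]_(sa : S * A) `|pi sa.1 sa.2 - pi' sa.1 sa.2|.

Definition open_in_Pplus (U : set (S -> A -> R)) :=
  U `<=` Pplus /\
  forall pi, U pi -> exists2 e : R, 0 < e &
    forall pi', Pplus pi' -> pdist pi pi' < e -> U pi'.

(* distribution of s_t when s_0 ~ d0, a_t ~ pi(.|s_t), s_{t+1} ~ T(.|s_t,a_t) *)
Fixpoint state_dist (Tr : S -> A -> S -> R) (d0 : S -> R) (pi : S -> A -> R)
    (t : nat) : S -> R :=
  match t with
  | 0%N => d0
  | t'.+1 => fun s' => \sum_(s : S) \sum_(a : A)
              state_dist Tr d0 pi t' s * pi s a * Tr s a s'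
  end.

Definition all_reachable (Tr : S -> A -> S -> R) (d0 : S -> R) :=
  forall s, exists pi, is_policy pi /\ exists t, 0 < state_dist Tr d0 pi t s.

(* J_R(pi) = E[ sum_t gamma^t R(s_t,a_t) ] = sum_t gamma^t E[R(s_t,a_t)] *)
Definition J (Tr : S -> A -> S -> R) (d0 : S -> R) (gamma : R)
    (Rw : S -> A -> R) (pi : S -> A -> R) : R :=
  limn (fun n => \sum_(0 <= t < n) (gamma ^+ t *
     \sum_(s : S) \sum_(a : A) state_dist Tr d0 pi t s * pi s a * Rw s a)).

Definition trivial_on (Pi : set (S -> A -> R)) (f : (S -> A -> R) -> R) :=
  forall pi pi', Pi pi -> Pi pi' -> f pi = f pi'.

Definition equivalent_on (Pi : set (S -> A -> R)) (f g : (S -> A -> R) -> R) :=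
  forall pi pi', Pi pi -> Pi pi' -> (f pi' <= f pi <-> g pi' <= g pi).

Definition hackable (Tr : S -> A -> S -> R) (d0 : S -> R) (gamma : R)
    (Pi : set (S -> A -> R)) (Rw Rw' : S -> A -> R) :=
  exists pi pi', [/\ Pi pi, Pi pi',
     J Tr d0 gamma Rw pi' < J Tr d0 gamma Rw pi &
     J Tr d0 gamma Rw' pi < J Tr d0 gamma Rw' pi'].

End MDP.

From HB Require Import structures.
From mathcomp Require Import all_boot all_order all_algebra.
From mathcomp Require Import all_classical all_reals all_analysis.
From mathcomp Require Import ring lra.
Import Order.TTheory GRing.Theory Num.Theory numFieldNormedType.Exports.
Local Open Scope ring_scope.
Local Open Scope classical_set_scope.
Set Implicit Arguments. Unset Strict Implicit. Unset Printing Implicit Defensive.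

(* Fix [pi0] in the open set [U] of full-support policies contained in [Pi], and
   let [G], [G'] be the policy gradients [mu0(s) Q(s, a)] of [J_R], [J_R'] at
   [pi0].  If some direction [D] tangent to the policy simplex has
   [<G, D> < 0 < <G', D>], moving [pi0] slightly along [D] stays in [U], lowers
   [J_R] and raises [J_R'], so the pair is hackable.  Otherwise a two-functional
   Farkas argument gives [G' = c G] on the tangent space with [c >= 0], or
   [G = 0] there.  As [pi0] has full support and every state is reachable,
   every occupancy measure vanishes where [mu0] does, so the performance
   difference lemma turns this first-order relation into the global identity
   [J_R'(pi) - J_R'(pi0) = c (J_R(pi) - J_R(pi0))]: then [J_R] or [J_R'] is
   trivial on [Pi], or the two are equivalent. *)

Lemma ler_sum_term (R : numDomainType) (I : finType) (F : I -> R) j :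
  (forall i, 0 <= F i) -> F j <= \sum_i F i.
Proof. by move=> F_ge0; rewrite (bigD1 j) //= lerDl sumr_ge0. Qed.

Lemma ler_norm_sum_mul (R : numDomainType) (I : finType) (e h : I -> R) :
  `|\sum_i e i * h i| <= (\sum_i `|e i|) * \sum_i `|h i|.
Proof.
apply: le_trans (ler_norm_sum _ _ _) _; rewrite mulr_suml; apply: ler_sum => i _.
by rewrite normrM ler_wpM2l // (ler_sum_term i (fun j => normr_ge0 (h j))).
Qed.

Lemma near0_mulr_lt (R : realFieldType) (C d : R) : 0 < d -> \forall e \near 0^'+, e * C < d.
Proof.
move=> d_gt0; have [C_le0|C_gt0] := leP C 0.
  apply: filterS (nbhs_right_gt (0 : R)) => e e_gt0.
  by apply: le_lt_trans d_gt0; rewrite mulr_ge0_le0 // ltW.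
by apply: filterS (nbhs_right_lt (divr_gt0 d_gt0 C_gt0)) => e; rewrite ltr_pdivlMr.
Qed.

Section FixpointEquations.
Variables (F : fieldType) (S : finType) (K : S -> S -> F).

Let n := #|S|.
Let mxK : 'M[F]_n := \matrix_(i, j) K (enum_val i) (enum_val j).

Lemma sum_enum_val (G : S -> F) : \sum_(i < n) G (enum_val i) = \sum_s G s.
Proof.
rewrite (reindex (@enum_val S predT)) //=.
by exists enum_rank => x _; [exact: enum_valK | exact: enum_rankK].
Qed.

Lemma solvable_fixpoint_equations :
  (forall x : S -> F, (forall s', x s' = \sum_s x s * K s s') -> forall s, x s = 0) ->
  forall b : S -> F,
  (exists x : S -> F, forall s', x s' = b s' + \sum_s x s * K s s') /\
  (exists y : S -> F, forall s, y s = b s + \sum_s' K s s' * y s').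
Proof.
move=> ker0 b; pose M := 1%:M - mxK.
have rowME (v : 'rV_n) s' :
    (v *m M) 0 (enum_rank s') = v 0 (enum_rank s') - \sum_s v 0 (enum_rank s) * K s s'.
  rewrite mulmxBr mulmx1 !mxE -sum_enum_val.
  by congr (_ - _); apply: eq_bigr => i _; rewrite enum_valK !mxE enum_rankK.
have colME (v : 'cV_n) s :
    (M *m v) (enum_rank s) 0 = v (enum_rank s) 0 - \sum_s' K s s' * v (enum_rank s') 0.
  rewrite mulmxBl mul1mx !mxE -sum_enum_val.
  by congr (_ - _); apply: eq_bigr => i _; rewrite enum_valK !mxE enum_rankK.
have M_unit : M \in unitmx.
  rewrite unitmxE unitfE; apply/negP => /det0P [w /negP w_neq0 wM0]; apply: w_neq0.
  have w0 : forall s, w 0 (enum_rank s) = 0.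
    apply: ker0 => s'; apply/eqP; rewrite -subr_eq0 -rowME wM0 mxE //.
  by apply/eqP/rowP => j; rewrite mxE -(enum_valK j) w0.
split.
- exists (fun s => (\row_j b (enum_val j) *m invmx M) 0 (enum_rank s)) => s'.
  apply/eqP; rewrite -subr_eq -rowME -mulmxA mulVmx // mulmx1 mxE enum_rankK //.
- exists (fun s => (invmx M *m \col_j b (enum_val j)) (enum_rank s) 0) => s.
  apply/eqP; rewrite -subr_eq -colME mulmxA mulmxV // mul1mx mxE enum_rankK //.
Qed.

End FixpointEquations.

Section ConeDichotomy.
Variables (R : realFieldType) (V : lmodType R) (W : set V) (f g : V -> R).
Hypotheses (W_comb : forall a b u v, W u -> W v -> W (a *: u + b *: v))
  (f_comb : forall a b u v, f (a *: u + b *: v) = a * f u + b * f v)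
  (g_comb : forall a b u v, g (a *: u + b *: v) = a * g u + b * g v).

Lemma scalar_dichotomy :
  (forall D, W D -> ~ (f D < 0 /\ 0 < g D)) ->
  (forall D, W D -> f D = 0) \/
  exists2 c, 0 <= c & forall D, W D -> g D = c * f D.
Proof.
move=> no_hack; have [f0|/existsNP [D0 /not_implyP [WD0 /eqP fD0]]] :=
  pselect (forall D, W D -> f D = 0); [by left | right].
pose D1 := (f D0)^-1 *: D0 + 0 *: D0.
have WD1 : W D1 by exact: W_comb.
have fD1 : f D1 = 1 by rewrite f_comb mulVf // mul0r addr0.
pose c := g D1.
have c_ge0 : 0 <= c.
  rewrite leNgt; apply/negP => c_lt0.
  apply: (no_hack ((-1) *: D1 + 0 *: D1)); first exact: W_comb.
  by rewrite f_comb g_comb fD1 -/c; split; lra.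
exists c => // D WD; apply/eqP; rewrite -subr_eq0; apply/negP => u_neq0.
set u := g D - c * f D in u_neq0.
(* [v] removes the [f]-component of [D]; pushing [u *: v] slightly against [D1] hacks. *)
pose v := 1 *: D + (- f D) *: D1.
have Wv : W v by exact: W_comb.
have fv : f v = 0 by rewrite f_comb fD1; ring.
have gv : g v = u by rewrite g_comb -/c /u; ring.
pose t := u ^+ 2 / (c + 1).
have u2_gt0 : 0 < u ^+ 2 by rewrite exprn_even_gt0 //; apply/orP; right; apply/negP.
have t_gt0 : 0 < t by rewrite divr_gt0 //; lra.
have tc_lt : t * c < u ^+ 2.
  have -> : u ^+ 2 = t * (c + 1) by rewrite /t mulrVK // unitfE; lra.
  by rewrite ltr_pM2l //; lra.
apply: (no_hack (u *: v + (- t) *: D1)); first exact: W_comb.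
rewrite f_comb g_comb fv gv fD1 -/c expr2 in tc_lt *; split; lra.
Qed.

End ConeDichotomy.

Section TangentDirections.
Variables (R : numFieldType) (S A : finType).

Definition inner (w D : S -> A -> R) : R := \sum_s \sum_a D s a * w s a.

(* Directions tangent to the product of simplices [Delta(A)^S]. *)
Definition is_tangent (D : S -> A -> R) := forall s, \sum_a D s a = 0.

Lemma inner_comb w x y (D1 D2 : S -> A -> R) :
  inner w (x *: D1 + y *: D2) = x * inner w D1 + y * inner w D2.
Proof.
rewrite /inner !mulr_sumr -big_split; apply: eq_bigr => s _.
rewrite !mulr_sumr -big_split; apply: eq_bigr => a _ /=.
by rewrite (_ : (x *: D1 + y *: D2) s a = x * D1 s a + y * D2 s a) //; ring.
Qed.

Lemma is_tangent_comb x y (D1 D2 : S -> A -> R) :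
  is_tangent D1 -> is_tangent D2 -> is_tangent (x *: D1 + y *: D2).
Proof.
move=> tD1 tD2 s; rewrite (eq_bigr (fun a => x * D1 s a + y * D2 s a)) //.
by rewrite big_split -!mulr_sumr /= tD1 tD2 !mulr0 addr0.
Qed.

Lemma inner_tangent_eq0 w : (forall D, is_tangent D -> inner w D = 0) ->
  forall s a a', w s a = w s a'.
Proof.
move=> w_perp s a a'; pose D s1 a1 : R := (s1 == s)%:R * ((a1 == a)%:R - (a1 == a')%:R).
have dirac (T : finType) (F : T -> R) t : \sum_i (i == t)%:R * F i = F t.
  by rewrite (bigD1 t) //= eqxx mul1r big1 ?addr0 // => i /negPf ->; rewrite mul0r.
have tD : is_tangent D.
  have sum_delta t : \sum_i (i == t)%:R = 1 :> R.
    by rewrite -[RHS](dirac _ (fun=> 1) t); apply: eq_bigr => i _; rewrite mulr1.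
  by move=> s1; rewrite -mulr_sumr sumrB !sum_delta subrr mulr0.
apply/eqP; rewrite -subr_eq0; apply/eqP; rewrite -(w_perp D tD) /inner.
under eq_bigr do under eq_bigr do rewrite -mulrA.
under eq_bigr do rewrite -mulr_sumr.
by rewrite dirac; under eq_bigr do rewrite mulrBl; rewrite sumrB !dirac.
Qed.

End TangentDirections.

Section DiscountedMDP.
Variables (R : realType) (S A : finType) (Tr : S -> A -> S -> R) (d0 : S -> R) (gamma : R).
Hypotheses (hTr : is_transition Tr) (hd0 : is_distr d0)
  (gamma_ge0 : 0 <= gamma) (gamma_lt1 : gamma < 1).

Definition Ppi (pi : S -> A -> R) (s s' : S) : R := \sum_a pi s a * Tr s a s'.
Definition rpi (pi Rw : S -> A -> R) (s : S) : R := \sum_a pi s a * Rw s a.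

Definition is_value (pi Rw : S -> A -> R) (V : S -> R) :=
  forall s, V s = rpi pi Rw s + gamma * \sum_s' Ppi pi s s' * V s'.

(* Unnormalised discounted state occupancy: [mu = sum_t gamma^t state_dist t]. *)
Definition is_occupancy (pi : S -> A -> R) (mu : S -> R) :=
  forall s', mu s' = d0 s' + gamma * \sum_s mu s * Ppi pi s s'.

Definition Jn (Rw pi : S -> A -> R) (n : nat) : R :=
  \sum_(0 <= t < n) (gamma ^+ t *
     \sum_(s : S) \sum_(a : A) state_dist Tr d0 pi t s * pi s a * Rw s a).

Lemma Ppi_distr pi s : is_policy pi -> is_distr (Ppi pi s).
Proof.
move=> hpi; split=> [s'|].
  by apply: sumr_ge0 => a _; apply: mulr_ge0; [exact: (hpi s).1 | exact: (hTr s a).1].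
rewrite /Ppi exchange_big /= -(hpi s).2; apply: eq_bigr => a _.
by rewrite -mulr_sumr (hTr s a).2 mulr1.
Qed.

Lemma state_distS pi t s' :
  state_dist Tr d0 pi t.+1 s' = \sum_s state_dist Tr d0 pi t s * Ppi pi s s'.
Proof. by apply: eq_bigr => s _; rewrite mulr_sumr; apply: eq_bigr => a _; rewrite mulrA. Qed.

Lemma state_dist_distr pi t : is_policy pi -> is_distr (state_dist Tr d0 pi t).
Proof.
move=> hpi; elim: t => [|t [ge0 sum1]] //; split=> [s'|].
  rewrite state_distS; apply: sumr_ge0 => s _; apply: mulr_ge0 => //.
  exact: (Ppi_distr s hpi).1.
under eq_bigr do rewrite state_distS.
rewrite exchange_big /= -sum1; apply: eq_bigr => s _.
by rewrite -mulr_sumr (Ppi_distr s hpi).2 mulr1.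
Qed.

Lemma expected_reward pi Rw t :
  \sum_s \sum_a state_dist Tr d0 pi t s * pi s a * Rw s a =
  \sum_s state_dist Tr d0 pi t s * rpi pi Rw s.
Proof. by apply: eq_bigr => s _; rewrite mulr_sumr; apply: eq_bigr => a _; rewrite mulrA. Qed.

Lemma discounted_fixpoint_eq0 pi : is_policy pi -> forall x : S -> R,
  (forall s', x s' = \sum_s x s * (gamma * Ppi pi s s')) -> forall s, x s = 0.
Proof.
move=> hpi x hx.
have contract : \sum_s `|x s| <= gamma * \sum_s `|x s|.
  rewrite mulr_sumr; apply: le_trans (_ : \sum_s' \sum_s `|x s| * (gamma * Ppi pi s s') <= _).
    apply: ler_sum => s' _; rewrite [in X in X <= _]hx.
    apply: le_trans (ler_norm_sum _ _ _) _; apply: ler_sum => s _.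
    by rewrite normrM (ger0_norm (mulr_ge0 gamma_ge0 ((Ppi_distr s hpi).1 s'))).
  rewrite exchange_big /=; apply: ler_sum => s _.
  by rewrite -mulr_sumr -mulr_sumr (Ppi_distr s hpi).2 mulr1 mulrC.
have norm0 : \sum_s `|x s| = 0.
  apply/eqP; rewrite eq_le sumr_ge0 // andbT.
  by rewrite -(pmulr_rle0 _ (_ : 0 < 1 - gamma)) ?subr_gt0 // mulrBl mul1r subr_le0.
by move=> s; apply/normr0_eq0/(psumr_eq0P _ norm0).
Qed.

Lemma exists_value pi Rw : is_policy pi -> exists V, is_value pi Rw V.
Proof.
move=> hpi; have [_ [V hV]] := solvable_fixpoint_equations
  (discounted_fixpoint_eq0 hpi) (rpi pi Rw).
by exists V => s; rewrite hV mulr_sumr; congr (_ + _); apply: eq_bigr => s' _; rewrite mulrA.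
Qed.

Lemma exists_occupancy pi : is_policy pi -> exists mu, is_occupancy pi mu.
Proof.
move=> hpi; have [[mu hmu] _] := solvable_fixpoint_equations
  (discounted_fixpoint_eq0 hpi) d0.
by exists mu => s'; rewrite hmu mulr_sumr; congr (_ + _); apply: eq_bigr => s _; rewrite mulrCA.
Qed.

Lemma Jn_cvg pi Rw V : is_policy pi -> is_value pi Rw V ->
  Jn Rw pi @ \oo --> \sum_s d0 s * V s.
Proof.
move=> hpi hV; pose e n := \sum_s state_dist Tr d0 pi n s * V s.
have eS t : gamma * e t.+1 = e t - \sum_s state_dist Tr d0 pi t s * rpi pi Rw s.
  rewrite /e; under eq_bigr do rewrite state_distS mulr_suml.
  rewrite exchange_big mulr_sumr -sumrB; apply: eq_bigr => s _ /=.
  rewrite [in RHS]hV mulrDr addrC addKr mulrCA; congr (_ * _).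
  by rewrite mulr_sumr; apply: eq_bigr => s' _; rewrite mulrA.
(* Telescoping the Bellman equation along the state distributions. *)
have JnE n : Jn Rw pi n = \sum_s d0 s * V s - gamma ^+ n * e n.
  elim: n => [|n IH]; first by rewrite /Jn big_nil expr0 mul1r subrr.
  rewrite /Jn big_nat_recr //= -/(Jn Rw pi n) IH expected_reward exprSr -mulrA eS.
  by rewrite mulrBr opprB addrA addrAC.
rewrite (funext JnE) -[X in _ --> X]subr0; apply: cvgB; first exact: cvg_cst.
pose C := \sum_s `|V s|.
have e_le n : `|e n| <= C.
  apply: le_trans (ler_norm_sum _ _ _) _; apply: ler_sum => s _.
  have [ge0 sum1] := state_dist_distr n hpi.
  by rewrite normrM ger0_norm // ler_piMl // -sum1; exact: ler_sum_term.
apply: (@squeeze_cvgr _ _ _ _ (fun n => - (gamma ^+ n * C)) (fun n => gamma ^+ n * C)).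
- apply: filterE => n; rewrite -ler_norml normrM ger0_norm ?exprn_ge0 //.
  by rewrite ler_wpM2l ?exprn_ge0.
- by rewrite -oppr0; apply: cvgN; rewrite -(mul0r C); apply: cvgMl; apply: cvg_expr;
    rewrite ger0_norm.
- by rewrite -(mul0r C); apply: cvgMl; apply: cvg_expr; rewrite ger0_norm.
Qed.

Lemma J_value pi Rw V : is_policy pi -> is_value pi Rw V ->
  J Tr d0 gamma Rw pi = \sum_s d0 s * V s.
Proof. by move=> hpi hV; apply: (cvg_lim (@norm_hausdorff _ _)); exact: Jn_cvg. Qed.

Lemma occupancy_dual pi mu (W : S -> R) : is_occupancy pi mu ->
  \sum_s d0 s * W s = \sum_s mu s * (W s - gamma * \sum_s' Ppi pi s s' * W s').
Proof.
move=> hmu; under [RHS]eq_bigr do rewrite mulrBr.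
rewrite sumrB; under [X in X - _]eq_bigr do rewrite hmu mulrDl.
rewrite big_split /= -addrA -[LHS]addr0; congr (_ + _); apply/esym/eqP.
rewrite subr_eq0; apply/eqP.
under eq_bigr do rewrite -mulrA mulr_suml.
under [RHS]eq_bigr do rewrite mulrCA mulr_sumr.
rewrite -!mulr_sumr exchange_big; congr (gamma * _).
by apply: eq_bigr => s _; apply: eq_bigr => s' _; rewrite !mulrA.
Qed.

Lemma J_occupancy pi Rw mu : is_policy pi -> is_occupancy pi mu ->
  J Tr d0 gamma Rw pi = \sum_s mu s * rpi pi Rw s.
Proof.
move=> hpi hmu; have [V hV] := exists_value Rw hpi.
rewrite (J_value hpi hV) (occupancy_dual _ hmu).
by apply: eq_bigr => s _; rewrite [in V s]hV addrK.
Qed.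

Definition qval (Rw : S -> A -> R) (V : S -> R) (s : S) (a : A) : R :=
  Rw s a + gamma * \sum_s' Tr s a s' * V s'.

Lemma qval_avg pi Rw V s :
  \sum_a pi s a * qval Rw V s a = rpi pi Rw s + gamma * \sum_s' Ppi pi s s' * V s'.
Proof.
rewrite /qval; under eq_bigr do rewrite mulrDr mulrCA mulr_sumr.
rewrite big_split -mulr_sumr exchange_big /=; congr (_ + gamma * _).
by apply: eq_bigr => s' _; rewrite mulr_suml; apply: eq_bigr => a _; rewrite mulrA.
Qed.

Lemma performance_difference pi0 pi1 Rw V0 mu1 :
  is_policy pi0 -> is_policy pi1 -> is_value pi0 Rw V0 -> is_occupancy pi1 mu1 ->
  J Tr d0 gamma Rw pi1 - J Tr d0 gamma Rw pi0 =
  \sum_s mu1 s * \sum_a (pi1 s a - pi0 s a) * qval Rw V0 s a.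
Proof.
move=> hpi0 hpi1 hV0 hmu1.
rewrite (J_value hpi0 hV0) (J_occupancy _ hpi1 hmu1) (occupancy_dual _ hmu1) -sumrB.
apply: eq_bigr => s _; rewrite -mulrBr; congr (_ * _).
under [RHS]eq_bigr do rewrite mulrBl.
by rewrite sumrB !qval_avg -hV0; ring.
Qed.

Lemma occupancy_perturbation pi0 pi1 mu0 mu1 :
  is_policy pi1 -> is_occupancy pi0 mu0 -> is_occupancy pi1 mu1 ->
  (1 - gamma) * \sum_s `|mu1 s - mu0 s| <=
  gamma * \sum_s' `|\sum_s mu0 s * (Ppi pi1 s s' - Ppi pi0 s s')|.
Proof.
move=> hpi1 hmu0 hmu1; pose B s' := \sum_s mu0 s * (Ppi pi1 s s' - Ppi pi0 s s').
have diffE s' : mu1 s' - mu0 s' = gamma * (\sum_s (mu1 s - mu0 s) * Ppi pi1 s s' + B s').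
  rewrite [mu1 s']hmu1 [mu0 s']hmu0 /B -big_split /=.
  under [in RHS]eq_bigr do rewrite mulrBr mulrBl subrKA.
  by rewrite sumrB; ring.
have diff_le s' :
    `|mu1 s' - mu0 s'| <= gamma * (\sum_s `|mu1 s - mu0 s| * Ppi pi1 s s' + `|B s'|).
  rewrite diffE normrM ger0_norm // ler_wpM2l //.
  apply: le_trans (ler_normD _ _) _; rewrite lerD2r.
  apply: le_trans (ler_norm_sum _ _ _) _; apply: ler_sum => s _.
  by rewrite normrM (ger0_norm ((Ppi_distr s hpi1).1 s')).
suff : \sum_s `|mu1 s - mu0 s| <= gamma * (\sum_s `|mu1 s - mu0 s| + \sum_s' `|B s'|).
  by rewrite /B; lra.
apply: le_trans (ler_sum _ (fun s' _ => diff_le s')) _.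
rewrite -mulr_sumr big_split /= ler_wpM2l // lerD2r exchange_big /=.
by apply: ler_sum => s _; rewrite -mulr_sumr (Ppi_distr s hpi1).2 mulr1.
Qed.

Lemma Jn_le_J (pi Rw : S -> A -> R) n : is_policy pi -> (forall s a, 0 <= Rw s a) ->
  Jn Rw pi n <= J Tr d0 gamma Rw pi.
Proof.
move=> hpi Rw_ge0; have [V hV] := exists_value Rw hpi.
have term_ge0 t : 0 <= gamma ^+ t *
    \sum_s \sum_a state_dist Tr d0 pi t s * pi s a * Rw s a.
  rewrite mulr_ge0 ?exprn_ge0 //; apply: sumr_ge0 => s _; apply: sumr_ge0 => a _.
  by rewrite !mulr_ge0 //; [exact: (state_dist_distr t hpi).1 | exact: (hpi s).1].
apply: nondecreasing_cvgn_le; last exact: cvgP _ (Jn_cvg hpi hV).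
move=> k m le_km.
by rewrite /Jn (big_cat_nat (leq0n k) le_km) /= lerDl; apply: sumr_ge0 => t _.
Qed.

Lemma state_dist_support pi pi0 t s : is_policy pi -> Pplus pi0 ->
  0 < state_dist Tr d0 pi t s -> 0 < state_dist Tr d0 pi0 t s.
Proof.
move=> hpi [hpi0 pi0_gt0]; elim: t s => [//|t IH] s' /=.
have term_ge0 (p : S -> A -> R) s a : is_policy p ->
    0 <= state_dist Tr d0 p t s * p s a * Tr s a s'.
  move=> hp; apply: mulr_ge0; [apply: mulr_ge0 |];
    [exact: (state_dist_distr t hp).1 | exact: (hp s).1 | exact: (hTr s a).1].
move=> /lt0r_neq0/eqP.
move=> /(psumr_neq0P (fun s _ => sumr_ge0 _ (fun a _ => term_ge0 pi s a hpi))) [s /andP [_]].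
move=> /lt0r_neq0/eqP/(psumr_neq0P (fun a _ => term_ge0 pi s a hpi)) [a /andP [_]].
move=> term_gt0; have [sd_gt0 Tr_gt0] : 0 < state_dist Tr d0 pi t s /\ 0 < Tr s a s'.
  move: term_gt0; rewrite !lt0r !mulf_eq0 !negb_or => /andP [/andP [/andP [-> _] ->] _].
  by rewrite (state_dist_distr t hpi).1 (hTr s a).1.
apply: lt_le_trans (ler_sum_term s (fun s => sumr_ge0 _ (fun a _ => term_ge0 pi0 s a hpi0))).
apply: lt_le_trans (ler_sum_term a (fun a => term_ge0 pi0 s a hpi0)).
by rewrite !mulr_gt0 // IH.
Qed.

Lemma occupancy_gt0 pi0 mu0 : all_reachable Tr d0 -> 0 < gamma ->
  Pplus pi0 -> is_occupancy pi0 mu0 -> forall s, 0 < mu0 s.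
Proof.
move=> reach gamma_gt0 pi0P hmu0 s; have [hpi0 _] := pi0P.
have [pi [hpi [t sd_gt0]]] := reach s.
(* [mu0 s] is the value of the indicator reward of [s]. *)
pose Rs (s1 : S) (a : A) : R := (s1 == s)%:R.
have rpiE s1 : rpi pi0 Rs s1 = (s1 == s)%:R by rewrite /rpi -mulr_suml (hpi0 s1).2 mul1r.
have <- : J Tr d0 gamma Rs pi0 = mu0 s.
  rewrite (J_occupancy _ hpi0 hmu0) (bigD1 s) //= big1 => [|s1 /negPf s1s].
    by rewrite rpiE eqxx mulr1 addr0.
  by rewrite rpiE s1s mulr0.
apply: lt_le_trans (Jn_le_J t.+1 hpi0 (fun s1 a => ler0n _ _)).
rewrite /Jn big_nat_recr //= ltr_pwDr //.
  rewrite expected_reward mulr_gt0 ?exprn_gt0 // (bigD1 s) //= big1 => [|s1 /negPf s1s].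
    by rewrite rpiE eqxx mulr1 addr0 (state_dist_support hpi pi0P).
  by rewrite rpiE s1s mulr0.
apply: sumr_ge0 => k _; rewrite expected_reward mulr_ge0 ?exprn_ge0 //.
apply: sumr_ge0 => s1 _; rewrite rpiE mulr_ge0 //; exact: (state_dist_distr k hpi0).1.
Qed.

Lemma occupancy_support pi0 pi1 mu0 mu1 : all_reachable Tr d0 ->
  Pplus pi0 -> is_occupancy pi0 mu0 -> is_occupancy pi1 mu1 ->
  forall s, mu0 s = 0 -> mu1 s = 0.
Proof.
move=> reach pi0P hmu0 hmu1 s mu0s.
have [gamma0|gamma_neq0] := eqVneq gamma 0.
  by rewrite hmu1 gamma0 mul0r addr0 -mu0s hmu0 gamma0 mul0r addr0.
have := occupancy_gt0 reach _ pi0P hmu0 s.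
by rewrite mu0s ltxx lt0r gamma_neq0 gamma_ge0 => /(_ isT).
Qed.

(* [mu s * Q(s, a)], the gradient of [J] in the policy entries. *)
Definition policy_grad (mu : S -> R) (Rw : S -> A -> R) (V : S -> R) (s : S) (a : A) : R :=
  mu s * qval Rw V s a.

Lemma sum_policy_diff_eq0 pi0 pi1 (mu0 mu1 : S -> R) (h : S -> A -> R) :
  is_policy pi0 -> is_policy pi1 -> (forall s, mu0 s = 0 -> mu1 s = 0) ->
  (forall s a a', mu0 s * h s a = mu0 s * h s a') ->
  \sum_s mu1 s * \sum_a (pi1 s a - pi0 s a) * h s a = 0.
Proof.
move=> hpi0 hpi1 supp h_const; apply: big1 => s _.
have [/supp -> | mu0s_neq0] := eqVneq (mu0 s) 0; first by rewrite mul0r.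
have [a0 _ | A0] := pickP (@predT A); last by rewrite big_pred0 ?mulr0.
rewrite (eq_bigr (fun a => (pi1 s a - pi0 s a) * h s a0)) => [|a _].
  by rewrite -mulr_suml sumrB (hpi0 s).2 (hpi1 s).2 subrr mul0r mulr0.
by congr (_ * _); apply: (mulfI mu0s_neq0).
Qed.

Lemma J_affine_of_grad c Rw Rw' pi0 mu0 V V' : all_reachable Tr d0 ->
  Pplus pi0 -> is_occupancy pi0 mu0 -> is_value pi0 Rw V -> is_value pi0 Rw' V' ->
  (forall D, is_tangent D ->
     inner (policy_grad mu0 Rw' V') D = c * inner (policy_grad mu0 Rw V) D) ->
  forall pi, is_policy pi ->
  J Tr d0 gamma Rw' pi - J Tr d0 gamma Rw' pi0 = c * (J Tr d0 gamma Rw pi - J Tr d0 gamma Rw pi0).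
Proof.
move=> reach pi0P hmu0 hV hV' grad_prop pi hpi; have [hpi0 _] := pi0P.
have [mu1 hmu1] := exists_occupancy hpi.
pose h s a := qval Rw' V' s a - c * qval Rw V s a.
have h_const s a a' : mu0 s * h s a = mu0 s * h s a'.
  apply: (inner_tangent_eq0 (w := fun s1 a1 => mu0 s1 * h s1 a1)) => D tD.
  rewrite -(subrr (inner (policy_grad mu0 Rw' V') D)) {2}(grad_prop D tD).
  rewrite /inner mulr_sumr -sumrB; apply: eq_bigr => s1 _.
  rewrite mulr_sumr -sumrB; apply: eq_bigr => a1 _; rewrite /policy_grad /h; ring.
rewrite (performance_difference hpi0 hpi hV hmu1) (performance_difference hpi0 hpi hV' hmu1).
apply/eqP; rewrite mulr_sumr -subr_eq0 -sumrB; apply/eqP.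
apply: etrans (sum_policy_diff_eq0 hpi0 hpi (occupancy_support reach pi0P hmu0 hmu1) h_const).
apply: eq_bigr => s _; rewrite mulrCA -mulrBr; congr (_ * _).
by rewrite mulr_sumr -sumrB; apply: eq_bigr => a _; rewrite /h; ring.
Qed.

Lemma J_first_order pi0 Rw V0 mu0 (D : S -> A -> R) :
  is_policy pi0 -> is_value pi0 Rw V0 -> is_occupancy pi0 mu0 ->
  exists C, forall eps pi1, is_policy pi1 -> (forall s a, pi1 s a = pi0 s a + eps * D s a) ->
  `|J Tr d0 gamma Rw pi1 - J Tr d0 gamma Rw pi0 - eps * inner (policy_grad mu0 Rw V0) D|
    <= eps ^+ 2 * C.
Proof.
move=> hpi0 hV0 hmu0; pose h s := \sum_a D s a * qval Rw V0 s a.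
pose B := \sum_s' `|\sum_s mu0 s * \sum_a D s a * Tr s a s'|.
pose K := gamma * B / (1 - gamma).
exists (K * \sum_s `|h s|) => eps pi1 hpi1 pi1E; have [mu1 hmu1] := exists_occupancy hpi1.
have occ_le : \sum_s `|mu1 s - mu0 s| <= `|eps| * K.
  have gamma1_gt0 : 0 < 1 - gamma by rewrite subr_gt0.
  rewrite -(ler_pM2l gamma1_gt0).
  have -> : (1 - gamma) * (`|eps| * K) = gamma * (`|eps| * B).
    by rewrite /K; field; rewrite subr_eq0 eq_sym lt_eqF.
  apply: le_trans (occupancy_perturbation hpi1 hmu0 hmu1) _.
  rewrite ler_wpM2l // /B mulr_sumr; apply: ler_sum => s' _.
  rewrite -normrM mulr_sumr le_eqVlt; apply/orP; left; apply/eqP; congr `|_|.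
  apply: eq_bigr => s _; rewrite /Ppi -sumrB mulrCA; congr (_ * _).
  by rewrite mulr_sumr; apply: eq_bigr => a _; rewrite pi1E; ring.
have -> : J Tr d0 gamma Rw pi1 - J Tr d0 gamma Rw pi0 - eps * inner (policy_grad mu0 Rw V0) D
    = eps * \sum_s (mu1 s - mu0 s) * h s.
  rewrite (performance_difference hpi0 hpi1 hV0 hmu1) /inner /policy_grad !mulr_sumr -sumrB.
  apply: eq_bigr => s _; rewrite /h mulrBl mulr_sumr mulr_sumr -sumrB -mulrBl !mulr_sumr.
  by apply: eq_bigr => a _; rewrite pi1E; ring.
rewrite normrM -(real_normK (num_real eps)) expr2 -mulrA ler_wpM2l //.
apply: le_trans (ler_norm_sum_mul _ _) _; rewrite mulrA ler_wpM2r //; exact: sumr_ge0.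
Qed.

Lemma hackable_along_tangent Rw Rw' pi0 mu0 V V' (U : set (S -> A -> R)) D :
  open_in_Pplus U -> U pi0 -> is_occupancy pi0 mu0 ->
  is_value pi0 Rw V -> is_value pi0 Rw' V' -> is_tangent D ->
  inner (policy_grad mu0 Rw V) D < 0 -> 0 < inner (policy_grad mu0 Rw' V') D ->
  exists2 pi1, U pi1 &
    J Tr d0 gamma Rw pi1 < J Tr d0 gamma Rw pi0 /\ J Tr d0 gamma Rw' pi0 < J Tr d0 gamma Rw' pi1.
Proof.
move=> [UP Uopen] Upi0 hmu0 hV hV' tD grad_lt0 grad'_gt0.
have [hpi0 pi0_gt0] := UP _ Upi0; have [eU eU_gt0 ballU] := Uopen _ Upi0.
have [C JC] := J_first_order D hpi0 hV hmu0.
have [C' JC'] := J_first_order D hpi0 hV' hmu0.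
near (0 : R)^'+ => eps.
pose pi1 s a := pi0 s a + eps * D s a.
have eps_gt0 : 0 < eps by near: eps; exact: nbhs_right_gt.
have pi1P : Pplus pi1.
  have pi1_gt0 s a : 0 < pi1 s a.
    have : forall sa : S * A, eps * - D sa.1 sa.2 < pi0 sa.1 sa.2.
      near: eps; apply: filter_forall => sa; exact: near0_mulr_lt.
    by move=> /(_ (s, a)); rewrite /pi1 mulrN /=; lra.
  split=> // s; split=> [a|]; first exact: ltW.
  by rewrite big_split /= -mulr_sumr tD mulr0 addr0 (hpi0 s).2.
exists pi1.
  have D_small : forall sa : S * A, eps * `|D sa.1 sa.2| < eU.
    near: eps; apply: filter_forall => sa; exact: near0_mulr_lt.
  apply: (ballU pi1 pi1P); rewrite /pdist; apply: bigmax_lt => // sa _.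
  by rewrite /pi1 opprD addNKr normrN normrM gtr0_norm.
have JE (C0 L J0 J1 : R) : `|J1 - J0 - eps * L| <= eps ^+ 2 * C0 ->
    `|J1 - J0 - eps * L| <= eps * (eps * C0) by rewrite mulrA -expr2.
split.
- have := JE _ _ _ _ (JC eps pi1 pi1P.1 (fun _ _ => erefl)); rewrite ler_norml => /andP [_].
  have : eps * (eps * C) < eps * - inner (policy_grad mu0 Rw V) D.
    rewrite ltr_pM2l //; near: eps; apply: near0_mulr_lt; lra.
  rewrite mulrN; lra.
- have := JE _ _ _ _ (JC' eps pi1 pi1P.1 (fun _ _ => erefl)); rewrite ler_norml => /andP [+ _].
  have : eps * (eps * C') < eps * inner (policy_grad mu0 Rw' V') D.
    rewrite ltr_pM2l //; near: eps; exact: near0_mulr_lt.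
  lra.
Unshelve. all: by end_near.
Qed.

End DiscountedMDP.

Lemma trivial_on_affine0 (R : realType) (S A : finType) (Pi : set (S -> A -> R))
    (f g : (S -> A -> R) -> R) pi0 :
  (forall pi, Pi pi -> g pi - g pi0 = 0 * (f pi - f pi0)) -> trivial_on Pi g.
Proof.
move=> gE pi pi' Pipi Pipi'; apply/eqP; rewrite -subr_eq0.
have -> : g pi - g pi' = (g pi - g pi0) - (g pi' - g pi0) by ring.
by rewrite !gE // !mul0r subrr.
Qed.

Lemma equivalent_on_affine (R : realType) (S A : finType) (Pi : set (S -> A -> R))
    (f g : (S -> A -> R) -> R) pi0 c : 0 < c ->
  (forall pi, Pi pi -> g pi - g pi0 = c * (f pi - f pi0)) -> equivalent_on Pi f g.
Proof.
move=> c_gt0 gE pi pi' Pipi Pipi'; rewrite -subr_ge0 -[in X in _ <-> X]subr_ge0.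
have -> : g pi - g pi' = c * (f pi - f pi').
  have -> : g pi - g pi' = (g pi - g pi0) - (g pi' - g pi0) by ring.
  by rewrite !gE //; ring.
by rewrite pmulr_rge0 // subr_ge0.
Qed.

Theorem mainTheorem13 (R : realType) (S A : finType)
  (Tr : S -> A -> S -> R) (d0 : S -> R) (gamma : R)
  (hA : (1 < #|A|)%N)
  (hTr : is_transition Tr) (hd0 : is_distr d0)
  (hgamma0 : 0 <= gamma) (hgamma1 : gamma < 1)
  (hreach : all_reachable Tr d0)
  (Pi : set (S -> A -> R))
  (hPi : forall pi, Pi pi -> is_policy pi)
  (hopen : exists U : set (S -> A -> R),
     [/\ U `<=` Pi, U !=set0 & open_in_Pplus U]) :
  forall Rw Rw' : S -> A -> R,
    ~ trivial_on Pi (J Tr d0 gamma Rw) ->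
    ~ trivial_on Pi (J Tr d0 gamma Rw') ->
    ~ equivalent_on Pi (J Tr d0 gamma Rw) (J Tr d0 gamma Rw') ->
    hackable Tr d0 gamma Pi Rw Rw'.
Proof.
move=> Rw Rw' nontriv nontriv' not_equiv.
have [U [UPi [pi0 Upi0] Uopen]] := hopen; have pi0P := Uopen.1 _ Upi0.
have [V hV] := exists_value hTr hgamma0 hgamma1 Rw pi0P.1.
have [V' hV'] := exists_value hTr hgamma0 hgamma1 Rw' pi0P.1.
have [mu0 hmu0] := exists_occupancy d0 hTr hgamma0 hgamma1 pi0P.1.
pose G := policy_grad Tr gamma mu0 Rw V; pose G' := policy_grad Tr gamma mu0 Rw' V'.
have [[D [tD G_lt0 G'_gt0]] | /forallNP no_dir] :=
  pselect (exists D, [/\ is_tangent D, inner G D < 0 & 0 < inner G' D]).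
  have [pi1 Upi1 []] := hackable_along_tangent hTr hd0 hgamma0 hgamma1
    Uopen Upi0 hmu0 hV hV' tD G_lt0 G'_gt0.
  by exists pi0, pi1; split; auto.
have [G0|[c c_ge0 G'E]] := scalar_dichotomy (@is_tangent_comb _ _ _) (inner_comb G) (inner_comb G')
  (fun D tD '(conj lt gt) => no_dir D (And3 tD lt gt)).
  case: nontriv; apply: (trivial_on_affine0 (f := J Tr d0 gamma Rw)) => pi Pipi.
  apply: (J_affine_of_grad hTr hd0 hgamma0 hgamma1 hreach pi0P hmu0 hV hV) => [D tD|].
    by rewrite G0 // mul0r.
  exact: hPi.
have affine pi Pipi :=
  J_affine_of_grad hTr hd0 hgamma0 hgamma1 hreach pi0P hmu0 hV hV' G'E (hPi pi Pipi).
have [c0|c_neq0] := eqVneq c 0.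
  by case: nontriv'; rewrite c0 in affine; exact: trivial_on_affine0 affine.
by case: not_equiv; apply: (equivalent_on_affine _ affine); rewrite lt0r c_neq0.
Qed.
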